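(* Let the parent function on $Q_1\setminus\{o\}$ be defined by the rule below, and for $p\in Q_1$ let $R(p)$ be the set consisting of $p$, its parent, the parent of its parent, and so on until $o$ is reached. Then for every $p\in Q_1$, $R(p)$ has error less than $1.5$ in the $L_\infty$ metric, i.e. every $v\in R(p)$ has $L_\infty$ distance less than $1.5$ from the Euclidean segment $\overline{op}$. Parent rule, applied to each $p\in Q_1\setminus\{o\}$ (first applicable case): (1) if $p_x\le 1$ and $p\neq(1,0)$, the parent is $p^\downarrow$; (2) else if $p_y\le 1$, the parent is $p^\leftarrow$; (3) else if $p_y=2$ and $D(p)$ is a power of $2$, the parent is $p^\downarrow$; (4) else if $D(p)-1$ is a power of $2$, the parent is whichever of $p^\downarrow,p^\leftarrow$ has odd $x$-coordinate; (5) otherwise, let $Z_i^j$ be the zone containing $p$, and the parent is whichever of $p^\downarrow,p^\leftarrow$ is closer to the point $\mathrm{Mid}(i,j,D(p)-1)$, ties broken arbitrarily.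
   Context: Let $o=(0,0)$ and $Q_1=\{p\in\mathbb{Z}^2: p_x\ge0,p_y\ge0\}$. For $p\in\mathbb{Z}^2$ let $D(p)=p_x+p_y$ (the diagonal of $p$), $p^\leftarrow=(p_x-1,p_y)$, $p^\downarrow=(p_x,p_y-1)$. For a point $q\ne o$ in the closed first quadrant let $M(q)=q_y/q_x$ if $q_x>0$ and $M(q)=\infty$ otherwise, and let $\ell(q)$ be the Euclidean line through $o$ and $q$. A point $r$ is ''below $\ell(q)$'' if $M(r)\le M(q)$ and ''above $\ell(q)$'' if $M(r)>M(q)$. For integers $i\ge2$ and $1\le j\le 2^i-1$ let $v_i^j=(j,2^i-j)$. For $1\le j\le 2^i-2$, the zone $Z_i^j$ is the set of all $r\in\mathbb{R}^2$ in the first quadrant with $2^i<r_x+r_y\le 2^{i+1}$, $r$ below $\ell(v_i^j)$ and $r$ above $\ell(v_i^{j+1})$. For a real $d$ with $2^i<d<2^{i+1}$, $\mathrm{Mid}(i,j,d)$ is the point on the line $x+y=d$ whose $L_\infty$ distances to $\ell(v_i^j)$ and $\ell(v_i^{j+1})$ are equal (the midpoint of the two intersection points of these lines with $x+y=d$). ''Closer'' in case (5) refers to $L_\infty$ distance. (Every point reaching case (5) lies in exactly one zone.) *)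

From Stdlib Require Import Reals ZArith Lra Lia.
Open Scope R_scope.

Definition pt := (Z * Z)%type.

Definition origin : pt := (0%Z, 0%Z).
Definition inQ1 (p : pt) : Prop := (0 <= fst p)%Z /\ (0 <= snd p)%Z.
Definition Ddiag (p : pt) : Z := (fst p + snd p)%Z.
Definition pleft (p : pt) : pt := (fst p - 1, snd p)%Z.
Definition pdown (p : pt) : pt := (fst p, snd p - 1)%Z.

Definition pow2 (n : Z) : Prop := exists k : nat, n = (2 ^ Z.of_nat k)%Z.

Definition rpt := (R * R)%type.
Definition toR (p : pt) : rpt := (IZR (fst p), IZR (snd p)).

Definition linf (a b : rpt) : R :=
  Rmax (Rabs (fst a - fst b)) (Rabs (snd a - snd b)).

(* r below l(q): M(r) <= M(q), with M(q) = q_y/q_x, or infinity if q_x = 0 *)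
Definition below (r q : rpt) : Prop :=
  if Req_EM_T (fst q) 0 then True
  else (fst r <> 0 /\ snd r / fst r <= snd q / fst q).
Definition above (r q : rpt) : Prop := ~ below r q.

Definition vij (i j : Z) : rpt := (IZR j, IZR (2 ^ i - j)).

Definition in_zone (i j : Z) (r : rpt) : Prop :=
  0 <= fst r /\ 0 <= snd r /\
  IZR (2 ^ i) < fst r + snd r <= IZR (2 ^ (i + 1)) /\
  below r (vij i j) /\ above r (vij i (j + 1)).

Definition inter (v : rpt) (d : R) : rpt :=
  (d / (fst v + snd v) * fst v, d / (fst v + snd v) * snd v).

Definition Mid (i j : Z) (d : R) : rpt :=
  ((fst (inter (vij i j) d) + fst (inter (vij i (j + 1)) d)) / 2,
   (snd (inter (vij i j) d) + snd (inter (vij i (j + 1)) d)) / 2).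

(* q is an admissible parent of p (p in Q1 \ {o}) according to the rule
   (first applicable case; ties in case (5) broken arbitrarily). *)
Definition case1 (p : pt) : Prop := (fst p <= 1)%Z /\ p <> (1%Z, 0%Z).
Definition case2 (p : pt) : Prop := (snd p <= 1)%Z.
Definition case3 (p : pt) : Prop := snd p = 2%Z /\ pow2 (Ddiag p).
Definition case4 (p : pt) : Prop := pow2 (Ddiag p - 1).

Definition valid_parent (p q : pt) : Prop :=
  (case1 p -> q = pdown p) /\
  (~ case1 p -> case2 p -> q = pleft p) /\
  (~ case1 p -> ~ case2 p -> case3 p -> q = pdown p) /\
  (~ case1 p -> ~ case2 p -> ~ case3 p -> case4 p ->
     (q = pdown p \/ q = pleft p) /\ Z.odd (fst q) = true) /\
  (~ case1 p -> ~ case2 p -> ~ case3 p -> ~ case4 p ->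
     exists i j : Z,
       (2 <= i)%Z /\ (1 <= j <= 2 ^ i - 2)%Z /\ in_zone i j (toR p) /\
       let m := Mid i j (IZR (Ddiag p - 1)) in
       ((q = pdown p /\ linf (toR (pdown p)) m <= linf (toR (pleft p)) m) \/
        (q = pleft p /\ linf (toR (pleft p)) m <= linf (toR (pdown p)) m))).

Definition in_R (par : pt -> pt) (p v : pt) : Prop :=
  exists k : nat, v = Nat.iter k par p /\
    (forall j : nat, (j < k)%nat -> Nat.iter j par p <> origin).

(* L_infinity distance from v to the segment [o,p] is less than c
   (the distance to the compact segment is attained) *)
Definition dist_seg_lt (v p : pt) (c : R) : Prop :=
  exists t : R, 0 <= t <= 1 /\
    linf (toR v) (t * IZR (fst p), t * IZR (snd p)) < c.

(* Fix p = (P, Q) with n = P + Q > 0. For an integer point v = (x, y) with x + y <= n, the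
   L_infinity distance from v to the segment op is |xQ - yP| / n, attained on the antidiagonal
   of v, so it suffices to keep 2 |xQ - yP| < 3n along the route.
   Let v lie on the diagonal m, 2^l < m <= 2^(l+1), inside the zone of p at level l. The zone
   meets that diagonal in an x-interval of width m / 2^l <= 2 around the abscissa mu of Mid.
   The route stays between the point (m/n) p of the segment and [mu - 1/2, mu + 1/2]: case (5)
   keeps this while the diagonal decreases, and case (4) passes to level l - 1 exactly at the
   midpoint of p's coarser zone on the diagonal 2^l. Hence the distance is at most 1 + 1/2, and
   strictly less because on the top diagonal mu is an integer. Near the axes (cases (1)-(3))
   the bound propagates by a direct estimate. *)

From Stdlib Require Import Reals ZArith Lra Lia Classical.
Local Open Scope Z_scope.

Lemma pow2_pow l : 0 <= l -> pow2 (2 ^ l).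
Proof. intros Hl. exists (Z.to_nat l). now rewrite Z2Nat.id. Qed.

Lemma Zpow2_succ l : 0 <= l -> 2 ^ (l + 1) = 2 * 2 ^ l.
Proof. intros Hl. rewrite Z.pow_add_r by lia. lia. Qed.

Lemma pow2_level_top l z : 0 <= l -> pow2 z -> 2 ^ l < z <= 2 * 2 ^ l -> z = 2 * 2 ^ l.
Proof.
  intros Hl [e ->] [Hlo Hhi]. rewrite <- Zpow2_succ in * by lia.
  apply Z.pow_lt_mono_r_iff in Hlo; try lia.
  apply Z.pow_le_mono_r_iff in Hhi; try lia.
  now replace (Z.of_nat e) with (l + 1) by lia.
Qed.

Lemma dyadic_level_unique i l m : 0 <= i -> 0 <= l ->
  2 ^ i < m <= 2 * 2 ^ i -> 2 ^ l < m <= 2 * 2 ^ l -> i = l.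
Proof.
  intros Hi Hl Hmi Hml.
  rewrite <- (Z.log2_unique (m - 1) i), <- (Z.log2_unique (m - 1) l);
    rewrite ?Z.pow_succ_r; lia.
Qed.

(* (x, y) is on or below l(v^k) and strictly above l(v^(k+1)), where v^k = (k, L - k). *)
Definition sector (L k x y : Z) : Prop := k * (x + y) <= L * x < (k + 1) * (x + y).

Lemma sector_unique L j k x y : 0 < x + y -> sector L j x y -> sector L k x y -> j = k.
Proof. unfold sector. intros Hm Hj Hk. nia. Qed.

Section Tracking.

Variables P Q : Z.
Hypotheses (HP : 0 <= P) (HQ : 0 <= Q).

(* Scaled by 2L(P + Q): on the diagonal m = x + y, the abscissa x lies between the point
   m P / (P + Q) of the segment and the interval [mu - 1/2, mu + 1/2], where mu = m (2k + 1) / 2L is the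
   abscissa of Mid on that diagonal. *)
Definition tracks (L k x y : Z) : Prop :=
  Z.min (2 * L * (x + y) * P) (((x + y) * (2 * k + 1) - L) * (P + Q))
  <= 2 * L * (P + Q) * x <=
  Z.max (2 * L * (x + y) * P) (((x + y) * (2 * k + 1) + L) * (P + Q)).

Lemma tracks_cross_bound L k x y : 0 < L -> L < x + y <= 2 * L ->
  sector L k P Q -> tracks L k x y -> 2 * Z.abs (x * Q - y * P) < 3 * (P + Q).
Proof.
  unfold sector, tracks. intros HL Hm Hk [Hlo Hhi].
  set (n := P + Q) in *. set (m := x + y) in *.
  assert (Hn : 0 < n) by nia.
  (* On the top diagonal mu is an integer, so x is never at distance exactly 1/2 from it. *)
  assert (Hmid : m = 2 * L -> 2 * L * n * x <> (m * (2 * k + 1) + L) * n).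
  { intros Hm2 C. subst m. rewrite Hm2 in C.
    assert (L * n * (2 * x - 4 * k - 3) = 0) as [E|E]%Z.mul_eq_0 by lia; nia. }
  assert (Hcross : 2 * L * n * x - 2 * L * m * P = 2 * L * (x * Q - y * P)) by (unfold n, m; ring).
  assert (- (3 * L * n) < 2 * L * (x * Q - y * P) < 3 * L * n) by nia.
  nia.
Qed.

Lemma tracks_sector L k x y : 0 < L -> L < x + y ->
  sector L k P Q -> tracks L k x y -> sector L k x y.
Proof.
  unfold sector, tracks. intros HL Hm [Hk1 Hk2] [Hlo Hhi].
  set (n := P + Q) in *. set (m := x + y) in *.
  assert (Hn : 0 < n) by nia.
  assert (2 * m * (k * n) <= 2 * m * (L * P) < 2 * m * ((k + 1) * n)) by nia.
  assert (2 * k * m * n < (m * (2 * k + 1) - L) * n) by nia.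
  assert ((m * (2 * k + 1) + L) * n < 2 * (k + 1) * m * n) by nia.
  assert (2 * k * m * n <= 2 * L * n * x < 2 * (k + 1) * m * n) by lia.
  nia.
Qed.

Lemma tracks_pdown L k x y : 0 < L -> 0 <= k -> tracks L k x y ->
  2 * L * x <= (x + y - 1) * (2 * k + 1) + L -> tracks L k x (y - 1).
Proof.
  unfold tracks. intros HL Hk [Hlo _] Hx.
  replace (x + (y - 1)) with (x + y - 1) by ring.
  assert (2 * L * (x + y - 1) * P <= 2 * L * (x + y) * P) by nia.
  assert (((x + y - 1) * (2 * k + 1) - L) * (P + Q) <=
          ((x + y) * (2 * k + 1) - L) * (P + Q)) by nia.
  assert (2 * L * (P + Q) * x <= ((x + y - 1) * (2 * k + 1) + L) * (P + Q)) by nia.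
  lia.
Qed.

Lemma tracks_pleft L k x y : 0 < L -> k < L -> tracks L k x y ->
  (x + y - 1) * (2 * k + 1) + L <= 2 * L * x -> tracks L k (x - 1) y.
Proof. unfold tracks. intros HL Hk [Hlo Hhi] Hx. nia. Qed.

Lemma tracks_self L k : tracks L k P Q.
Proof. unfold tracks. lia. Qed.

Lemma tracks_midpoint L k x y : 0 <= L -> x + y = 2 * L -> x = 2 * k + 1 -> tracks L k x y.
Proof. unfold tracks. intros HL Hm Hx. rewrite Hm. nia. Qed.

End Tracking.

Local Close Scope Z_scope.

Lemma Rdiv_le_cross_iff a b c d : 0 < a -> 0 < c -> b / a <= d / c <-> b * c <= d * a.
Proof.
  intros Ha Hc.
  assert (Eb : b / a * (a * c) = b * c) by (field; lra).
  assert (Ed : d / c * (a * c) = d * a) by (field; lra).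
  rewrite <- Eb, <- Ed. split; intros H.
  - apply Rmult_le_compat_r; [nra | exact H].
  - apply Rmult_le_reg_r with (a * c); [nra | exact H].
Qed.

Lemma below_vij_iff i j x y : (1 <= j)%Z -> (j <= 2 ^ i)%Z -> (0 < x)%Z ->
  below (toR (x, y)) (vij i j) <-> (j * (x + y) <= 2 ^ i * x)%Z.
Proof.
  intros Hj Hji Hx. unfold below, vij, toR; cbn [fst snd].
  destruct (Req_EM_T (IZR j) 0) as [E%eq_IZR | _]; [lia |].
  rewrite Rdiv_le_cross_iff by (apply IZR_lt; lia).
  rewrite <- !mult_IZR. split.
  - intros [_ H%le_IZR]. lia.
  - intros H. split; [apply not_0_IZR; lia | apply IZR_le; lia].
Qed.

Lemma in_zone_sector i j x y : (0 <= i)%Z -> (1 <= j <= 2 ^ i - 2)%Z ->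
  in_zone i j (toR (x, y)) -> (2 ^ i < x + y <= 2 * 2 ^ i)%Z /\ sector (2 ^ i) j x y.
Proof.
  intros Hi Hj (Hx & _ & [Hlo Hhi] & Hbelow & Habove).
  cbn [toR fst snd] in Hx, Hlo, Hhi.
  rewrite <- plus_IZR in Hlo, Hhi. apply lt_IZR in Hlo. apply le_IZR in Hhi.
  rewrite Z.pow_add_r in Hhi by lia.
  apply le_IZR in Hx.
  assert (Hx0 : (x <> 0)%Z).
  { intros ->. unfold below, vij in Hbelow; cbn [fst snd] in Hbelow.
    destruct (Req_EM_T (IZR j) 0) as [E%eq_IZR | _]; [lia | tauto]. }
  rewrite below_vij_iff in Hbelow by lia.
  unfold above in Habove. rewrite below_vij_iff in Habove by lia.
  unfold sector. lia.
Qed.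

Lemma Rabs_le_Rabs_pred u : Rabs u <= Rabs (u - 1) <-> u <= 1 / 2.
Proof. unfold Rabs. destruct (Rcase_abs u), (Rcase_abs (u - 1)); lra. Qed.

Lemma Rabs_pred_le_Rabs u : Rabs (u - 1) <= Rabs u <-> 1 / 2 <= u.
Proof. unfold Rabs. destruct (Rcase_abs u), (Rcase_abs (u - 1)); lra. Qed.

Lemma linf_antidiag a b : fst a + snd a = fst b + snd b -> linf a b = Rabs (fst a - fst b).
Proof.
  intros E. unfold linf.
  replace (snd a - snd b) with (- (fst a - fst b)) by lra.
  rewrite Rabs_Ropp. apply Rmax_left. lra.
Qed.

Lemma Mid_coords i j d : (0 <= i)%Z ->
  2 * IZR (2 ^ i) * fst (Mid i j d) = d * (2 * IZR j + 1) /\ fst (Mid i j d) + snd (Mid i j d) = d.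
Proof.
  intros Hi.
  assert (HL : IZR (2 ^ i) <> 0) by (apply not_0_IZR; pose proof (Z.pow_pos_nonneg 2 i); lia).
  unfold Mid, inter, vij; cbn [fst snd].
  rewrite !minus_IZR, !plus_IZR.
  replace (IZR j + (IZR (2 ^ i) - IZR j)) with (IZR (2 ^ i)) by ring.
  replace (IZR j + 1 + (IZR (2 ^ i) - (IZR j + 1))) with (IZR (2 ^ i)) by ring.
  split; field; exact HL.
Qed.

Lemma Mid_closer i j x y (M := Mid i j (IZR (Ddiag (x, y) - 1))) : (0 <= i)%Z ->
  (linf (toR (pdown (x, y))) M <= linf (toR (pleft (x, y))) M ->
     (2 * 2 ^ i * x <= (x + y - 1) * (2 * j + 1) + 2 ^ i)%Z) /\
  (linf (toR (pleft (x, y))) M <= linf (toR (pdown (x, y))) M ->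
     ((x + y - 1) * (2 * j + 1) + 2 ^ i <= 2 * 2 ^ i * x)%Z).
Proof.
  intros Hi. destruct (Mid_coords i j (IZR (Ddiag (x, y) - 1)) Hi) as [Hfst Hsum].
  fold M in Hfst, Hsum.
  unfold Ddiag in *; cbn [fst snd] in *.
  rewrite !(linf_antidiag (toR _) M); unfold toR, pdown, pleft; cbn [fst snd];
    [| rewrite Hsum, !minus_IZR, plus_IZR; ring ..].
  assert (HL : 0 < IZR (2 ^ i)) by (apply IZR_lt, Z.pow_pos_nonneg; lia).
  rewrite minus_IZR. set (u := IZR x - fst M).
  replace (IZR x - 1 - fst M) with (u - 1) by (unfold u; ring).
  assert (Hu : IZR (2 * 2 ^ i * x - (x + y - 1) * (2 * j + 1)) = 2 * IZR (2 ^ i) * u).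
  { unfold u. rewrite Rmult_minus_distr_l, Hfst.
    repeat rewrite ?minus_IZR, ?mult_IZR, ?plus_IZR. ring. }
  split; intros H.
  - apply Rabs_le_Rabs_pred in H.
    apply Z.le_sub_le_add_l, le_IZR. rewrite Hu. nra.
  - apply Rabs_pred_le_Rabs in H.
    apply Z.le_add_le_sub_l, le_IZR. rewrite Hu. nra.
Qed.

Lemma dist_seg_lt_self p c : 0 < c -> dist_seg_lt p p c.
Proof.
  intros Hc. exists 1. split; [lra |].
  unfold linf, toR; cbn [fst snd]. rewrite !Rmult_1_l, !Rminus_diag, Rabs_R0, Rmax_left; lra.
Qed.

Lemma dist_seg_lt_of_cross x y P Q : (0 <= x)%Z -> (0 <= y)%Z -> (0 < P + Q)%Z ->
  (x + y <= P + Q)%Z -> (2 * Z.abs (x * Q - y * P) < 3 * (P + Q))%Z ->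
  dist_seg_lt (x, y) (P, Q) (3 / 2).
Proof.
  intros Hx%IZR_le Hy%IZR_le Hn%IZR_lt Hm%IZR_le Hc%IZR_lt.
  rewrite plus_IZR in Hn. rewrite !plus_IZR in Hm.
  rewrite mult_IZR, abs_IZR, minus_IZR, !mult_IZR, plus_IZR in Hc.
  set (n := IZR P + IZR Q) in *. set (c := IZR x * IZR Q - IZR y * IZR P) in *.
  exists ((IZR x + IZR y) / n). split.
  - split; apply (Rmult_le_reg_r n); [lra | | lra |];
      replace ((IZR x + IZR y) / n * n) with (IZR x + IZR y) by (field; lra); lra.
  - unfold linf, toR; cbn [fst snd].
    replace (IZR x - (IZR x + IZR y) / n * IZR P) with (c / n)
      by (unfold c, n in *; field; lra).
    replace (IZR y - (IZR x + IZR y) / n * IZR Q) with (- (c / n))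
      by (unfold c, n in *; field; lra).
    rewrite Rabs_Ropp, Rmax_left by lra.
    unfold Rdiv. rewrite Rabs_mult, Rabs_inv, (Rabs_pos_eq n) by lra.
    apply (Rmult_lt_reg_r n); [lra |].
    replace (Rabs c * / n * n) with (Rabs c) by (field; lra). lra.
Qed.

Local Open Scope Z_scope.

Section Invariant.

Variables P Q : Z.
Hypotheses (HP : 0 <= P) (HQ : 0 <= Q) (Hn : 0 < P + Q).

Definition zone_tracked (x y : Z) : Prop :=
  exists l k, 0 <= l /\ 1 <= k <= 2 ^ l - 2 /\ 2 ^ l < x + y <= 2 * 2 ^ l /\
    sector (2 ^ l) k P Q /\ tracks P Q (2 ^ l) k x y.

Definition route_inv (v : pt) : Prop :=
  0 <= fst v /\ 0 <= snd v /\ fst v + snd v <= P + Q /\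
  2 * Z.abs (fst v * Q - snd v * P) < 3 * (P + Q) /\
  (fst v <= 1 \/ snd v <= 1 \/ zone_tracked (fst v) (snd v)).

Lemma route_inv_dist_seg_lt v : route_inv v -> dist_seg_lt v (P, Q) (3 / 2)%R.
Proof. destruct v as [x y]. intros (Hx & Hy & Hm & Hc & _). now apply dist_seg_lt_of_cross. Qed.

Lemma route_inv_of_tracked x y : 0 <= x -> 0 <= y -> x + y <= P + Q ->
  zone_tracked x y -> route_inv (x, y).
Proof.
  intros Hx Hy Hm Ht. pose proof Ht as (l & k & Hl & Hk & Hlev & Hsec & Htr).
  assert (HL : 0 < 2 ^ l) by (apply Z.pow_pos_nonneg; lia).
  repeat split; cbn [fst snd]; auto.
  apply (tracks_cross_bound P Q HP HQ (2 ^ l) k); auto; lia.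
Qed.

Lemma route_inv_on_pow2_diag l x y : 1 <= l -> x + y = 2 ^ l -> Z.odd x = true ->
  0 <= x -> 0 <= y -> x + y <= P + Q ->
  (x - 1) * (P + Q) <= 2 ^ l * P < (x + 1) * (P + Q) -> route_inv (x, y).
Proof.
  intros Hl Hm [k Hk]%Z.odd_spec Hx Hy Hmn Hpos.
  assert (HL : 2 ^ l = 2 * 2 ^ (l - 1)) by (rewrite <- Zpow2_succ by lia; f_equal; lia).
  assert (HL0 : 0 < 2 ^ (l - 1)) by (apply Z.pow_pos_nonneg; lia).
  assert (Hsec : sector (2 ^ (l - 1)) k P Q).
  { rewrite HL, Hk in Hpos. unfold sector. lia. }
  assert (Htr : tracks P Q (2 ^ (l - 1)) k x y) by (apply tracks_midpoint; lia).
  assert (Hc := tracks_cross_bound P Q HP HQ (2 ^ (l - 1)) k x y HL0 ltac:(lia) Hsec Htr).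
  repeat split; cbn [fst snd]; try lia.
  destruct (Z_le_gt_dec k 0); [left; lia |].
  destruct (Z_le_gt_dec k (2 ^ (l - 1) - 2)); [right; right | right; left; lia].
  exists (l - 1), k. repeat split; auto; lia.
Qed.

Lemma route_inv_parent_low_x x y q : route_inv (x, y) -> x <= 1 -> (x, y) <> origin ->
  valid_parent (x, y) q -> route_inv q.
Proof.
  intros (Hx & Hy & Hm & Hc & _) Hx1 Hv (H1 & H2 & _). cbn [fst snd] in *.
  destruct (Z.eq_dec x 1) as [-> |], (Z.eq_dec y 0) as [-> |].
  - rewrite H2 by (unfold case1, case2; cbn; intuition). repeat split; cbn [pleft fst snd]; lia.
  - rewrite H1 by (unfold case1; cbn; split; [lia | congruence]).
    repeat split; cbn [pdown fst snd]; lia.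
  - assert (x = 0) as -> by lia. now contradiction Hv.
  - rewrite H1 by (unfold case1; cbn; split; [lia | congruence]).
    assert (x = 0) as -> by lia. repeat split; cbn [pdown fst snd]; nia.
Qed.

Lemma route_inv_parent_low_y x y q : route_inv (x, y) -> 2 <= x -> y <= 1 ->
  valid_parent (x, y) q -> route_inv q.
Proof.
  intros (Hx & Hy & Hm & Hc & _) Hx2 Hy1 (_ & H2 & _). cbn [fst snd] in *.
  rewrite H2 by (unfold case1, case2; cbn; lia).
  repeat split; cbn [pleft fst snd]; nia.
Qed.

Lemma route_inv_parent_tracked x y q : 0 <= x -> 0 <= y -> x + y <= P + Q -> zone_tracked x y ->
  valid_parent (x, y) q -> route_inv q.
Proof.
  intros Hx Hy Hmn (l & k & Hl & Hk & Hlev & Hsec & Htr) (_ & _ & H3 & H4 & H5).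
  assert (HL : 0 < 2 ^ l) by (apply Z.pow_pos_nonneg; lia).
  assert (Hv : sector (2 ^ l) k x y) by (apply (tracks_sector P Q HP HQ); auto; lia).
  pose proof Hv as [Hv1 Hv2].
  assert (Hx2 : 2 <= x) by nia.
  assert (Hy2 : 2 <= y) by nia.
  assert (nc1 : ~ case1 (x, y)) by (unfold case1; cbn [fst snd]; lia).
  assert (nc2 : ~ case2 (x, y)) by (unfold case2; cbn [fst snd]; lia).
  (* y = 2 on the top diagonal would force k = 2^l - 1. *)
  assert (nc3 : ~ case3 (x, y)).
  { unfold case3, Ddiag; cbn [fst snd]. intros [Hy3 Hpow].
    apply (pow2_level_top l) in Hpow; [nia | lia | lia]. }
  destruct (Z.eq_dec (x + y) (2 ^ l + 1)) as [Hm1 | Hm1].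
  - assert (c4 : case4 (x, y)).
    { unfold case4, Ddiag; cbn [fst snd].
      replace (x + y - 1) with (2 ^ l) by lia. now apply pow2_pow. }
    destruct (H4 nc1 nc2 nc3 c4) as [Hq Hodd].
    assert (Hl1 : 1 <= l) by (destruct (Z.eq_dec l 0) as [-> |]; [cbn in Hk; lia | lia]).
    assert (x = k + 1) as -> by nia.
    destruct Hq as [-> | ->]; cbn [pdown pleft fst snd] in Hodd |- *;
      apply (route_inv_on_pow2_diag l); cbn [fst snd]; auto; unfold sector in Hsec; nia.
  - assert (nc4 : ~ case4 (x, y)).
    { unfold case4, Ddiag; cbn [fst snd]. intros Hpow.
      apply (pow2_level_top l) in Hpow; lia. }
    destruct (H5 nc1 nc2 nc3 nc4) as (i & j & Hi & Hj & Hz & Hch).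
    destruct (in_zone_sector i j x y ltac:(lia) Hj Hz) as [Hlev' Hsec'].
    assert (i = l) as -> by (apply (dyadic_level_unique i l (x + y)); lia).
    assert (j = k) as -> by (apply (sector_unique (2 ^ l) j k x y); auto; lia).
    destruct (Mid_closer l k x y Hl) as [Hdown Hleft].
    destruct Hch as [[-> Hc] | [-> Hc]]; unfold pdown, pleft; cbn [fst snd];
      apply route_inv_of_tracked; try lia;
      exists l, k; refine (conj Hl (conj Hk (conj _ (conj Hsec _)))); try lia.
    + apply tracks_pdown; auto; lia.
    + apply tracks_pleft; auto; lia.
Qed.

Lemma route_inv_root : P <= 1 \/ Q <= 1 \/ zone_tracked P Q -> route_inv (P, Q).
Proof. intros H. repeat split; cbn [fst snd]; auto; lia. Qed.

Lemma route_inv_parent v q : route_inv v -> v <> origin -> valid_parent v q -> route_inv q.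
Proof.
  destruct v as [x y]. intros Hg Hv Hq.
  pose proof Hg as (Hx & Hy & Hm & _ & [Hx1 | [Hy1 | Ht]]); cbn [fst snd] in *.
  - now apply (route_inv_parent_low_x x y).
  - destruct (Z_le_gt_dec x 1).
    + now apply (route_inv_parent_low_x x y).
    + apply (route_inv_parent_low_y x y); auto; lia.
  - now apply (route_inv_parent_tracked x y).
Qed.

Lemma route_inv_parent_root q : (P, Q) <> origin -> valid_parent (P, Q) q -> route_inv q.
Proof.
  intros Ho Hq.
  destruct (Z_le_gt_dec P 1).
  { apply (route_inv_parent (P, Q)); auto. apply route_inv_root. now left. }
  destruct (Z_le_gt_dec Q 1).
  { apply (route_inv_parent (P, Q)); auto. apply route_inv_root. now right; left. }
  pose proof Hq as (_ & _ & H3 & H4 & H5).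
  assert (nc1 : ~ case1 (P, Q)) by (unfold case1; cbn [fst snd]; lia).
  assert (nc2 : ~ case2 (P, Q)) by (unfold case2; cbn [fst snd]; lia).
  (* In cases (3) and (4) the root is not tracked, so its parent is handled directly. *)
  destruct (classic (case3 (P, Q))) as [c3 | nc3].
  { rewrite (H3 nc1 nc2 c3). destruct c3 as [HQ2 _]; cbn [snd] in HQ2.
    unfold pdown; repeat split; cbn [fst snd]; lia. }
  destruct (classic (case4 (P, Q))) as [c4 | nc4].
  { destruct (H4 nc1 nc2 nc3 c4) as [Hq4 Hodd].
    destruct c4 as [e He]; unfold Ddiag in He; cbn [fst snd] in He.
    assert (He2 : (2 <= Z.of_nat e)%Z) by (destruct e as [| [| e]]; cbn in He; lia).
    destruct Hq4 as [-> | ->]; unfold pdown, pleft in *; cbn [fst snd] in *;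
      apply (route_inv_on_pow2_diag (Z.of_nat e)); cbn [fst snd]; auto; rewrite <- ?He; nia. }
  destruct (H5 nc1 nc2 nc3 nc4) as (i & j & Hi & Hj & Hz & _).
  destruct (in_zone_sector i j P Q ltac:(lia) Hj Hz) as [Hlev Hsec].
  apply (route_inv_parent (P, Q)); auto. apply route_inv_root. right; right.
  exists i, j. refine (conj _ (conj Hj (conj Hlev (conj Hsec _)))); [lia | apply tracks_self].
Qed.

End Invariant.

Lemma route_inv_iter (par : pt -> pt)
  (Hpar : forall p : pt, inQ1 p -> p <> origin -> valid_parent p (par p)) P Q :
  0 <= P -> 0 <= Q -> 0 < P + Q -> forall k w, route_inv P Q w ->
  (forall j, (j < k)%nat -> Nat.iter j par w <> origin) -> route_inv P Q (Nat.iter k par w).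
Proof.
  intros HP HQ Hn k. induction k as [| k IH]; intros w Hw Hne; [exact Hw |].
  rewrite Nat.iter_succ.
  assert (Hk : route_inv P Q (Nat.iter k par w)) by (apply IH; auto).
  assert (Hk0 : Nat.iter k par w <> origin) by (apply Hne; lia).
  apply (route_inv_parent P Q HP HQ Hn (Nat.iter k par w)); auto.
  apply Hpar; auto. destruct Hk as (Hx & Hy & _). now split.
Qed.

Local Close Scope Z_scope.

Theorem lemma3 (par : pt -> pt)
  (Hpar : forall p : pt, inQ1 p -> p <> origin -> valid_parent p (par p)) :
  forall p : pt, inQ1 p ->
  forall v : pt, in_R par p v -> dist_seg_lt v p (3 / 2).
Proof.
  intros [P Q] [HP HQ] v [k [-> Hk]]; cbn [fst snd] in HP, HQ.
  destruct k as [| k]; [apply dist_seg_lt_self; lra |].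
  assert (Ho : (P, Q) <> origin) by (apply (Hk 0%nat); lia).
  assert (Hn : (0 < P + Q)%Z).
  { destruct (Z.eq_dec P 0), (Z.eq_dec Q 0); subst; [now contradiction Ho | lia ..]. }
  rewrite Nat.iter_succ_r. apply (route_inv_dist_seg_lt P Q Hn).
  apply route_inv_iter; auto.
  - apply route_inv_parent_root; auto. apply Hpar; [now split | exact Ho].
  - intros j Hj. rewrite <- Nat.iter_succ_r. apply Hk. lia.
Qed.
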